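(* Let $y_0\in E$ and let $u$ be a positive solution of $0=\tfrac12b^2u''+\tilde au'+\eta u-u^2-d\frac{(u')^2}{u}$ on $[y_0,\infty)$ with $u(y)/\eta(y)\to1$ as $y\to\infty$. Assume that on $[y_0,\infty)$ we have $\eta\in C^2$, $\eta>0$, $\Psi\eta\le1$ and $\bar a:=\frac{\tilde a}{\eta}+(b^2-2d)\frac{\eta'}{\eta^2}\le0$. Then either $u>\eta$ for all sufficiently large $y$, or $u\le\eta$ for all sufficiently large $y$. If in addition $\frac{\tilde a}{b^2}\le-C$ on $[y_0,\infty)$ for some constant $C>0$, $\eta(y)\to\infty$ and $\eta(y)e^{-2Cy}\to0$ as $y\to\infty$, then $u\le\eta$ for all sufficiently large $y$.
   Context: $E=(E_-,\infty)$ with $E_-\in\{-\infty\}\cup\mathbb R$. $r,\lambda,\sigma,a,b,\rho,\delta:E\to\mathbb R$ are locally Lipschitz with $\sigma>0$, $b(y)\neq0$, $\rho(y)\in[-1,1]$; $R\in(0,\infty)\setminus\{1\}$. Define $\eta=\frac1R\big(\delta-(1-R)(r+\frac{\lambda^2}{2R})\big)$, $\tilde a=a+\frac{1-R}{R}\rho\lambda b$, $d=\frac12b^2((1-\rho^2)R+\rho^2+1)$, and for positive $g\in C^2$, $\Psi g=1+\frac{\frac12b^2g''+\tilde ag'}{g^2}-d\frac{(g')^2}{g^3}$. *)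

From Stdlib Require Import Reals.
From Coquelicot Require Import Coquelicot.
Open Scope R_scope.

(* E = (Em, +oo) with Em in {-oo} ∪ R, represented by Em : Rbar, Em <> p_infty. *)
Definition inE (Em : Rbar) (y : R) : Prop := Rbar_lt Em y.

Definition loc_lipschitz_on (Em : Rbar) (f : R -> R) : Prop :=
  forall x, inE Em x -> exists del L, 0 < del /\
    forall y z, inE Em y -> inE Em z -> Rabs (y - x) < del -> Rabs (z - x) < del ->
      Rabs (f y - f z) <= L * Rabs (y - z).

Definition eta_fun (Rc : R) (delta r lam : R -> R) (y : R) : R :=
  / Rc * (delta y - (1 - Rc) * (r y + lam y ^ 2 / (2 * Rc))).

Definition atil (Rc : R) (a rho lam b : R -> R) (y : R) : R :=
  a y + (1 - Rc) / Rc * rho y * lam y * b y.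

Definition dcoef (Rc : R) (b rho : R -> R) (y : R) : R :=
  / 2 * b y ^ 2 * ((1 - rho y ^ 2) * Rc + rho y ^ 2 + 1).

Definition Psi (b atl d g : R -> R) (y : R) : R :=
  1 + (/ 2 * b y ^ 2 * Derive (Derive g) y + atl y * Derive g y) / g y ^ 2
    - d y * (Derive g y) ^ 2 / g y ^ 3.

Definition abar (b atl d eta : R -> R) (y : R) : R :=
  atl y / eta y + (b y ^ 2 - 2 * d y) * Derive eta y / eta y ^ 2.

From Stdlib Require Import Reals Lra Psatz Classical.
From Coquelicot Require Import Coquelicot.
Open Scope R_scope.

(* Dichotomy: at a critical point of v = u/eta with v > 1, the equation for u and
   Psi eta <= 1 force v'' > 0, so v has no interior maximum above 1; hence v
   cannot cross the level 1 infinitely often.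
   Growth: if u > eta eventually, the equation gives u'' > 2C u' wherever u' > 0;
   as eta -> oo there is a point with u' > 0, and from there on u' grows at
   least like e^{2Cy}, hence so does u, contradicting u ~ eta = o(e^{2Cy}). *)

Lemma pos_deriv_right_gt (f : R -> R) (c l : R) :
  derivable_pt_lim f c l -> 0 < l ->
  exists del, 0 < del /\ forall t, 0 < t < del -> f c < f (c + t).
Proof.
  intros Hf Hl. destruct (Hf l Hl) as [del Hdel].
  exists del. split; [apply cond_pos|].
  intros t [Ht Htdel].
  assert (Hq := Hdel t (Rgt_not_eq _ _ Ht)).
  rewrite Rabs_right in Hq by lra.
  apply Rabs_def2 in Hq; [|exact Htdel]. destruct Hq as [_ Hq].
  assert (Hslope : 0 < (f (c + t) - f c) / t) by lra.
  replace (f (c + t)) with (f c + (f (c + t) - f c) / t * t) by (field; lra).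
  nra.
Qed.

Lemma pos_deriv_not_max (f : R -> R) (c b l : R) :
  c < b -> derivable_pt_lim f c l -> 0 < l ->
  exists x, c < x <= b /\ f c < f x.
Proof.
  intros Hcb Hf Hl. destruct (pos_deriv_right_gt f c l Hf Hl) as [del [Hdel Hgt]].
  set (h := Rmin (del / 2) (b - c)).
  assert (0 < h) by (apply Rmin_glb_lt; lra).
  assert (h <= b - c) by apply Rmin_r.
  assert (h <= del / 2) by apply Rmin_l.
  exists (c + h). split; [lra|]. apply Hgt. lra.
Qed.

Lemma pos_second_deriv_not_max (f f' : R -> R) (c b l : R) :
  c < b -> (forall x, c <= x <= b -> derivable_pt_lim f x (f' x)) ->
  f' c = 0 -> derivable_pt_lim f' c l -> 0 < l ->
  exists x, c < x <= b /\ f c < f x.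
Proof.
  intros Hcb Hf Hcrit Hf' Hl.
  destruct (pos_deriv_right_gt f' c l Hf' Hl) as [del [Hdel Hgt]].
  set (h := Rmin (del / 2) (b - c)).
  assert (0 < h) by (apply Rmin_glb_lt; lra).
  assert (h <= b - c) by apply Rmin_r.
  assert (h <= del / 2) by apply Rmin_l.
  destruct (MVT_cor2 f f' c (c + h)) as [xi [Hmvt Hxi]]; [lra| |].
  { intros x Hx. apply Hf. lra. }
  assert (Hpos : 0 < f' xi).
  { replace xi with (c + (xi - c)) by ring. rewrite <- Hcrit. apply Hgt. lra. }
  exists (c + h). split; [lra|]. nra.
Qed.

Lemma crit_pos_second_deriv_no_interior_max (v v' : R -> R) (a l : R) :
  (forall y, a <= y -> derivable_pt_lim v y (v' y)) ->
  (forall c, a < c -> v' c = 0 -> l < v c -> exists k, derivable_pt_lim v' c k /\ 0 < k) ->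
  forall y1 c y3, a <= y1 -> y1 < c < y3 -> l < v c ->
  exists x, y1 <= x <= y3 /\ v c < v x.
Proof.
  intros Hv Hconvex y1 c y3 Hy1 [Hc1 Hc3] Hvc.
  apply NNPP. intros Hmax.
  assert (Hle : forall x, y1 <= x <= y3 -> v x <= v c).
  { intros x Hx. apply Rnot_lt_le. intros Hlt. apply Hmax. exists x. auto. }
  assert (Hcrit : v' c = 0).
  { assert (Hd := Hv c ltac:(lra)).
    rewrite <- (derive_pt_eq_0 v c (v' c) (exist _ (v' c) Hd) Hd).
    apply (deriv_maximum v y1 y3); auto.
    intros x Hx1 Hx2. apply Hle. lra. }
  destruct (Hconvex c ltac:(lra) Hcrit Hvc) as [k [Hk Hkpos]].
  destruct (pos_second_deriv_not_max v v' c y3 k) as [x [Hx Hvx]]; auto.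
  { intros x Hx. apply Hv. lra. }
  assert (v x <= v c) by (apply Hle; lra). lra.
Qed.

Lemma eventually_one_side_of_level (v : R -> R) (a l : R) :
  (forall y, a <= y -> continuity_pt v y) ->
  (forall y1 c y3, a <= y1 -> y1 < c < y3 -> l < v c ->
     exists x, y1 <= x <= y3 /\ v c < v x) ->
  (exists Y, forall y, Y <= y -> l < v y) \/ (exists Y, forall y, Y <= y -> v y <= l).
Proof.
  intros Hcont Hnomax.
  destruct (classic (exists Y, forall y, Y <= y -> l < v y)) as [Habove|Hnabove];
    [now left|].
  destruct (classic (exists Y, forall y, Y <= y -> v y <= l)) as [Hbelow|Hnbelow];
    [now right|].
  exfalso.
  assert (Hlow : forall Y, exists y, Y <= y /\ v y <= l).
  { intros Y. apply NNPP. intros H. apply Hnabove. exists Y. intros y Hy.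
    apply Rnot_le_lt. intros Hvy. apply H. eauto. }
  assert (Hhigh : forall Y, exists y, Y <= y /\ l < v y).
  { intros Y. apply NNPP. intros H. apply Hnbelow. exists Y. intros y Hy.
    apply Rnot_lt_le. intros Hvy. apply H. eauto. }
  destruct (Hlow a) as [y1 [Hy1 Hv1]].
  destruct (Hhigh (y1 + 1)) as [y2 [Hy2 Hv2]].
  destruct (Hlow (y2 + 1)) as [y3 [Hy3 Hv3]].
  destruct (continuity_ab_maj v y1 y3) as [c [Hmax Hc]]; [lra| |].
  { intros x Hx. apply Hcont. lra. }
  assert (v y2 <= v c) by (apply Hmax; lra).
  assert (c <> y1) by (intros ->; lra).
  assert (c <> y3) by (intros ->; lra).
  destruct (Hnomax y1 c y3) as [x [Hx Hvx]]; [lra|lra|lra|].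
  assert (v x <= v c) by (apply Hmax; lra). lra.
Qed.

Lemma nondecr_of_deriv_pos_where_pos (F F' : R -> R) (a : R) :
  (forall y, a <= y -> derivable_pt_lim F y (F' y)) ->
  (forall y, a <= y -> 0 < F y -> 0 < F' y) -> 0 < F a ->
  forall y, a <= y -> F a <= F y.
Proof.
  intros HF HF' Ha b Hab.
  apply Rnot_lt_le. intros Hlt.
  assert (Hb : a < b) by (destruct Hab; [assumption|subst; lra]).
  destruct (continuity_ab_maj F a b) as [c [Hmax Hc]]; [lra| |].
  { intros x Hx. apply derivable_continuous_pt. exists (F' x). apply HF. lra. }
  assert (F a <= F c) by (apply Hmax; lra).
  assert (Hcb : c < b) by (destruct (Req_dec c b); [subst; lra|lra]).
  destruct (pos_deriv_not_max F c b (F' c)) as [x [Hx Hgt]]; auto.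
  - apply HF. lra.
  - apply HF'; lra.
  - assert (F x <= F c) by (apply Hmax; lra). lra.
Qed.

Lemma pos_deriv_of_increase (f f' : R -> R) (a b : R) :
  a < b -> (forall x, a <= x <= b -> derivable_pt_lim f x (f' x)) -> f a < f b ->
  exists c, a < c < b /\ 0 < f' c.
Proof.
  intros Hab Hf Hlt.
  destruct (MVT_cor2 f f' a b Hab Hf) as [c [Hmvt Hc]].
  exists c. split; [exact Hc|nra].
Qed.

Lemma diff_nondecr_of_deriv_le (f g f' g' : R -> R) (a : R) :
  (forall y, a <= y -> derivable_pt_lim f y (f' y)) ->
  (forall y, a <= y -> derivable_pt_lim g y (g' y)) ->
  (forall y, a <= y -> g' y <= f' y) ->
  forall y, a <= y -> f a - g a <= f y - g y.
Proof.
  intros Hf Hg Hle y [Hy|<-]; [|lra].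
  destruct (MVT_cor2 (fun x => f x - g x) (fun x => f' x - g' x) a y Hy)
    as [xi [Hmvt Hxi]].
  - intros x Hx. apply derivable_pt_lim_minus; [apply Hf|apply Hg]; lra.
  - assert (g' xi <= f' xi) by (apply Hle; lra). nra.
Qed.

Lemma deriv_exp_lower_bound (u1 u2 : R -> R) (k a : R) :
  (forall y, a <= y -> derivable_pt_lim u1 y (u2 y)) ->
  (forall y, a <= y -> 0 < u1 y -> k * u1 y < u2 y) -> 0 < u1 a ->
  forall y, a <= y -> u1 a * exp (- (k * a)) * exp (k * y) <= u1 y.
Proof.
  intros Hu1 Hgrow Ha y Hy.
  set (F := fun x => u1 x * exp (- (k * x))).
  assert (HF : F a <= F y).
  { apply (nondecr_of_deriv_pos_where_pos F
             (fun x => (u2 x - k * u1 x) * exp (- (k * x))) a); auto.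
    - intros x Hx.
      replace ((u2 x - k * u1 x) * exp (- (k * x)))
        with (u2 x * exp (- (k * x)) + u1 x * (- k * exp (- (k * x)))) by ring.
      apply (derivable_pt_lim_mult u1 (fun x => exp (- (k * x)))); [now apply Hu1|].
      apply is_derive_Reals. auto_derive; [easy|ring].
    - intros x Hx HFx. unfold F in HFx.
      assert (Hexp := exp_pos (- (k * x))).
      assert (0 < u1 x) by nra.
      assert (k * u1 x < u2 x) by auto. nra.
    - unfold F. assert (Hexp := exp_pos (- (k * a))). nra. }
  unfold F in HF.
  assert (Hexp := exp_pos (k * y)).
  replace (u1 y) with (u1 y * exp (- (k * y)) * exp (k * y))
    by (rewrite exp_Ropp; field; apply exp_neq_0).
  nra.
Qed.

Lemma wronskian_deriv_pos_at_zero (U U1 U2 E E1 E2 B A D : R) :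
  0 < E < U -> 0 <= B -> U1 * E - E1 * U = 0 ->
  0 = / 2 * B * U2 + A * U1 + E * U - U ^ 2 - D * U1 ^ 2 / U ->
  1 + (/ 2 * B * E2 + A * E1) / E ^ 2 - D * E1 ^ 2 / E ^ 3 <= 1 ->
  0 < U2 * E - E2 * U.
Proof.
  intros [HE HEU] HB Hcrit Hode Hpsi.
  set (P := / 2 * B * E2 + A * E1 - D * E1 ^ 2 / E).
  assert (HP : P <= 0).
  { replace P with (E ^ 2 * ((/ 2 * B * E2 + A * E1) / E ^ 2 - D * E1 ^ 2 / E ^ 3))
      by (unfold P; field; lra).
    assert (0 < E ^ 2) by (apply pow_lt; lra). nra. }
  (* With U1 = E1 U / E the equation for U splits along the Wronskian U2 E - E2 U. *)
  assert (Hsplit : / 2 * B * U2 + A * U1 + E * U - U ^ 2 - D * U1 ^ 2 / U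
     = / 2 * B * ((U2 * E - E2 * U) / E) + U / E * P + U * (E - U)).
  { replace U1 with (E1 * U / E) by (field_simplify_eq; lra).
    unfold P. field. lra. }
  rewrite Hsplit in Hode.
  assert (U / E * P <= 0) by (assert (0 < U / E) by (apply Rdiv_lt_0_compat; lra); nra).
  assert (HW : 0 < B * ((U2 * E - E2 * U) / E)) by nra.
  apply Rnot_le_lt. intros HWle.
  assert ((U2 * E - E2 * U) / E <= 0).
  { unfold Rdiv. assert (0 < / E) by (apply Rinv_0_lt_compat; lra). nra. }
  nra.
Qed.

Lemma quotient_deriv_at_crit (u u1 u2 e e1 e2 : R -> R) (c : R) :
  derivable_pt_lim u c (u1 c) -> derivable_pt_lim u1 c (u2 c) ->
  derivable_pt_lim e c (e1 c) -> derivable_pt_lim e1 c (e2 c) -> e c <> 0 ->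
  u1 c * e c - e1 c * u c = 0 ->
  derivable_pt_lim (fun y => (u1 y * e y - e1 y * u y) / (e y)²) c
    ((u2 c * e c - e2 c * u c) / (e c)²).
Proof.
  intros Du Du1 De De1 Hec Hcrit.
  assert (Hd := derivable_pt_lim_div (fun y => u1 y * e y - e1 y * u y)
                  (fun y => (e y)²) c _ _
                  (derivable_pt_lim_minus _ _ c _ _
                     (derivable_pt_lim_mult u1 e c _ _ Du1 De)
                     (derivable_pt_lim_mult e1 u c _ _ De1 Du))
                  (derivable_pt_lim_mult e e c _ _ De De)
                  ltac:(unfold Rsqr; nra)).
  replace ((u2 c * e c - e2 c * u c) / (e c)²) with
    (((u2 c * e c + u1 c * e1 c - (e2 c * u c + e1 c * u1 c)) * (e c)²
      - (e1 c * e c + e c * e1 c) * (u1 c * e c - e1 c * u c)) / ((e c)²)²).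
  - exact Hd.
  - rewrite Hcrit. unfold Rsqr. field. exact Hec.
Qed.

Lemma eventually_above_or_below (u u1 u2 e e1 e2 B A D : R -> R) (a : R) :
  (forall y, a <= y -> derivable_pt_lim u y (u1 y)) ->
  (forall y, a <= y -> derivable_pt_lim u1 y (u2 y)) ->
  (forall y, a <= y -> derivable_pt_lim e y (e1 y)) ->
  (forall y, a <= y -> derivable_pt_lim e1 y (e2 y)) ->
  (forall y, a <= y -> 0 < e y) ->
  (forall y, a <= y -> 0 <= B y) ->
  (forall y, a <= y ->
     0 = / 2 * B y * u2 y + A y * u1 y + e y * u y - u y ^ 2 - D y * u1 y ^ 2 / u y) ->
  (forall y, a <= y ->
     1 + (/ 2 * B y * e2 y + A y * e1 y) / e y ^ 2 - D y * e1 y ^ 2 / e y ^ 3 <= 1) ->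
  (exists Y, forall y, Y <= y -> u y > e y) \/ (exists Y, forall y, Y <= y -> u y <= e y).
Proof.
  intros Du Du1 De De1 He HB Hode Hpsi.
  set (v := fun y => u y / e y).
  set (v' := fun y => (u1 y * e y - e1 y * u y) / (e y)²).
  assert (Dv : forall y, a <= y -> derivable_pt_lim v y (v' y)).
  { intros y Hy. apply derivable_pt_lim_div; auto. apply Rgt_not_eq, He, Hy. }
  assert (Hgt : forall y, a <= y -> 1 < v y <-> e y < u y).
  { intros y Hy. unfold v. rewrite <- Rlt_div_r by now apply He. lra. }
  assert (Hconvex : forall c, a < c -> v' c = 0 -> 1 < v c ->
                      exists k, derivable_pt_lim v' c k /\ 0 < k).
  { intros c Hc Hcrit Hvc.
    assert (Hec := He c ltac:(lra)).
    assert (Hsq : 0 < (e c)²) by (unfold Rsqr; nra).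
    assert (HW : u1 c * e c - e1 c * u c = 0).
    { unfold v' in Hcrit. apply Rmult_eq_reg_r with (/ (e c)²).
      - rewrite Rmult_0_l. exact Hcrit.
      - apply Rgt_not_eq, Rinv_0_lt_compat, Hsq. }
    exists ((u2 c * e c - e2 c * u c) / (e c)²). split.
    - apply quotient_deriv_at_crit; [apply Du|apply Du1|apply De|apply De1|lra|exact HW]; lra.
    - apply Rdiv_lt_0_compat; [|exact Hsq].
      apply (wronskian_deriv_pos_at_zero _ (u1 c) _ _ (e1 c) _ (B c) (A c) (D c));
        auto with real.
      apply Hgt in Hvc; lra. }
  destruct (eventually_one_side_of_level v a 1) as [[Y HY]|[Y HY]].
  - intros y Hy. apply derivable_continuous_pt. exists (v' y). now apply Dv.
  - exact (crit_pos_second_deriv_no_interior_max v v' a 1 Dv Hconvex).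
  - left. exists (Rmax Y a). intros y Hy.
    apply Hgt; [|apply HY]; generalize (Rmax_l Y a) (Rmax_r Y a); lra.
  - right. exists (Rmax Y a). intros y Hy.
    assert (Hya : a <= y) by (generalize (Rmax_r Y a); lra).
    apply Rnot_lt_le. intros Hlt. apply Hgt in Hlt; [|exact Hya].
    assert (v y <= 1) by (apply HY; generalize (Rmax_l Y a); lra). lra.
Qed.

Lemma ode_second_deriv_gt (U U1 U2 E B A D C : R) :
  0 < E < U -> 0 < B -> 0 <= D -> A <= - C * B -> 0 < U1 ->
  0 = / 2 * B * U2 + A * U1 + E * U - U ^ 2 - D * U1 ^ 2 / U ->
  2 * C * U1 < U2.
Proof.
  intros [HE HEU] HB HD HA HU1 Hode.
  assert (0 <= D * U1 ^ 2 / U).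
  { apply Rdiv_le_0_compat; [|lra]. apply Rmult_le_pos; [lra|apply pow2_ge_0]. }
  assert (0 < U * (U - E)) by nra.
  nra.
Qed.

Lemma exp_lower_bound_of_deriv_growth (u u1 u2 : R -> R) (k a : R) :
  0 < k ->
  (forall y, a <= y -> derivable_pt_lim u y (u1 y)) ->
  (forall y, a <= y -> derivable_pt_lim u1 y (u2 y)) ->
  (forall y, a <= y -> 0 < u1 y -> k * u1 y < u2 y) -> 0 < u1 a ->
  exists K m, 0 < K /\ forall y, a <= y -> m + K * exp (k * y) <= u y.
Proof.
  intros Hk Du Du1 Hgrow Ha.
  set (K := u1 a * exp (- (k * a))).
  assert (HK : 0 < K) by (unfold K; assert (Hx := exp_pos (- (k * a))); nra).
  set (g := fun y => K / k * exp (k * y)).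
  exists (K / k), (u a - g a). split; [now apply Rdiv_lt_0_compat|].
  intros y Hy.
  assert (Hdiff : u a - g a <= u y - g y).
  { apply (diff_nondecr_of_deriv_le u g u1 (fun y => K * exp (k * y))); auto.
    - intros x Hx. apply is_derive_Reals. unfold g. auto_derive; [easy|field; lra].
    - exact (deriv_exp_lower_bound u1 u2 k a Du1 Hgrow Ha). }
  unfold g in *. lra.
Qed.

Lemma not_eventually_above (u u1 u2 e B A D : R -> R) (Y C : R) :
  0 < C ->
  (forall y, Y <= y -> derivable_pt_lim u y (u1 y)) ->
  (forall y, Y <= y -> derivable_pt_lim u1 y (u2 y)) ->
  (forall y, Y <= y -> 0 < e y < u y) ->
  (forall y, Y <= y -> 0 < B y) ->
  (forall y, Y <= y -> 0 <= D y) ->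
  (forall y, Y <= y -> A y <= - C * B y) ->
  (forall y, Y <= y ->
     0 = / 2 * B y * u2 y + A y * u1 y + e y * u y - u y ^ 2 - D y * u1 y ^ 2 / u y) ->
  is_lim (fun y => u y / e y) p_infty 1 ->
  is_lim e p_infty p_infty ->
  is_lim (fun y => e y * exp (- (2 * C * y))) p_infty 0 ->
  False.
Proof.
  intros HC Du Du1 Hue HB HD HA Hode Hratio Heinf Hsmall.
  assert (Hgrow : forall y, Y <= y -> 0 < u1 y -> 2 * C * u1 y < u2 y).
  { intros y Hy Hu1.
    apply (ode_second_deriv_gt (u y) (u1 y) (u2 y) (e y) (B y) (A y) (D y)); auto. }
  assert (Hstart : exists Y1, Y <= Y1 /\ 0 < u1 Y1).
  { destruct (Heinf (fun z => u Y < z) (ex_intro _ (u Y) (fun z Hz => Hz))) as [M HM].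
    set (T := Rmax M Y + 1).
    assert (HYT : Y < T) by (unfold T; generalize (Rmax_r M Y); lra).
    destruct (pos_deriv_of_increase u u1 Y T HYT) as [Y1 [HY1 Hpos]].
    - intros x Hx. apply Du. lra.
    - assert (u Y < e T) by (apply HM; unfold T; generalize (Rmax_l M Y); lra).
      assert (e T < u T) by (apply Hue; lra). lra.
    - exists Y1. split; [lra|exact Hpos]. }
  destruct Hstart as [Y1 [HY1 Hu1Y1]].
  destruct (exp_lower_bound_of_deriv_growth u u1 u2 (2 * C) Y1) as [K [m [HK Hlower]]];
    [lra|intros x Hx; apply Du; lra|intros x Hx; apply Du1; lra
    |intros x Hx; apply Hgrow; lra|exact Hu1Y1|].
  assert (Hev : Rbar_locally p_infty (fun y =>
     (u y / e y < 2 /\ e y * exp (- (2 * C * y)) < K / 4) /\ (Rabs m < e y /\ Y1 < y))).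
  { repeat apply filter_and.
    - apply (Hratio (fun z => z < 2)). apply (locally_open (fun z => z < 2));
        [apply open_lt|easy|simpl; lra].
    - apply (Hsmall (fun z => z < K / 4)).
      apply (locally_open (fun z => z < K / 4)); [apply open_lt|easy|simpl; lra].
    - exact (Heinf (fun z => _ < z) (ex_intro _ _ (fun z Hz => Hz))).
    - exists Y1. easy. }
  destruct (Hierarchy.filter_ex _ Hev) as [y [[Hu2e Hexp] [Hey Hy]]].
  assert (HeY := Hue y ltac:(lra)).
  assert (Hlow := Hlower y ltac:(lra)).
  rewrite Rlt_div_l in Hu2e by lra.
  assert (Hbig : 4 * e y < K * exp (2 * C * y)).
  { assert (Hx := exp_pos (2 * C * y)).
    replace (e y) with (e y * exp (- (2 * C * y)) * exp (2 * C * y))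
      by (rewrite exp_Ropp; field; apply exp_neq_0).
    nra. }
  assert (- e y < m) by (generalize (Rabs_def2 _ _ Hey); lra).
  lra.
Qed.

Lemma dcoef_nonneg (Rc : R) (b rho : R -> R) (y : R) :
  0 < Rc -> -1 <= rho y <= 1 -> 0 <= dcoef Rc b rho y.
Proof.
  intros HRc Hrho. unfold dcoef.
  assert (0 <= 1 - rho y ^ 2) by nra.
  assert (0 <= b y ^ 2) by apply pow2_ge_0.
  assert (0 <= rho y ^ 2) by apply pow2_ge_0.
  assert (0 <= (1 - rho y ^ 2) * Rc) by nra.
  nra.
Qed.

Theorem theorem4p13
  (Em : Rbar) (HEm : Em <> p_infty)
  (r lam sigma a b rho delta : R -> R) (Rc : R)
  (Hr : loc_lipschitz_on Em r) (Hlam : loc_lipschitz_on Em lam)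
  (Hsig : loc_lipschitz_on Em sigma) (Ha : loc_lipschitz_on Em a)
  (Hb : loc_lipschitz_on Em b) (Hrho : loc_lipschitz_on Em rho)
  (Hdelta : loc_lipschitz_on Em delta)
  (Hsigpos : forall y, inE Em y -> 0 < sigma y)
  (Hbnz : forall y, inE Em y -> b y <> 0)
  (Hrhob : forall y, inE Em y -> -1 <= rho y <= 1)
  (HRpos : 0 < Rc) (HR1 : Rc <> 1)
  (y0 : R) (Hy0 : inE Em y0)
  (u : R -> R)
  (Hupos : forall y, y0 <= y -> 0 < u y)
  (Hu1 : forall y, y0 <= y -> ex_derive u y)
  (Hu2 : forall y, y0 <= y -> ex_derive (Derive u) y)
  (Hode : forall y, y0 <= y ->
     0 = / 2 * b y ^ 2 * Derive (Derive u) y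
         + atil Rc a rho lam b y * Derive u y
         + eta_fun Rc delta r lam y * u y - u y ^ 2
         - dcoef Rc b rho y * (Derive u y) ^ 2 / u y)
  (Hlim : is_lim (fun y => u y / eta_fun Rc delta r lam y) p_infty 1)
  (Heta1 : forall y, y0 <= y -> ex_derive (eta_fun Rc delta r lam) y)
  (Heta2 : forall y, y0 <= y -> ex_derive (Derive (eta_fun Rc delta r lam)) y)
  (Heta2c : forall y, y0 <= y ->
     continuous (Derive (Derive (eta_fun Rc delta r lam))) y)
  (Hetapos : forall y, y0 <= y -> 0 < eta_fun Rc delta r lam y)
  (HPsi : forall y, y0 <= y ->
     Psi b (atil Rc a rho lam b) (dcoef Rc b rho) (eta_fun Rc delta r lam) y <= 1)
  (Habar : forall y, y0 <= y ->
     abar b (atil Rc a rho lam b) (dcoef Rc b rho) (eta_fun Rc delta r lam) y <= 0) :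
  ((exists Y, forall y, Y <= y -> u y > eta_fun Rc delta r lam y)
   \/ (exists Y, forall y, Y <= y -> u y <= eta_fun Rc delta r lam y))
  /\
  (forall C : R, 0 < C ->
     (forall y, y0 <= y -> atil Rc a rho lam b y / b y ^ 2 <= - C) ->
     is_lim (eta_fun Rc delta r lam) p_infty p_infty ->
     is_lim (fun y => eta_fun Rc delta r lam y * exp (- (2 * C * y))) p_infty 0 ->
     exists Y, forall y, Y <= y -> u y <= eta_fun Rc delta r lam y).
Proof.
  set (e := eta_fun Rc delta r lam) in *.
  assert (Hin : forall y, y0 <= y -> inE Em y).
  { intros y Hy. eapply Rbar_lt_le_trans; [exact Hy0|exact Hy]. }
  assert (Hderiv : forall f y, ex_derive f y -> derivable_pt_lim f y (Derive f y)).
  { intros f y Hf. now apply is_derive_Reals, Derive_correct. }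
  assert (Hb2 : forall y, y0 <= y -> 0 < b y ^ 2).
  { intros y Hy. apply pow2_gt_0, Hbnz, Hin, Hy. }
  assert (Hdichotomy :
    (exists Y, forall y, Y <= y -> u y > e y) \/ (exists Y, forall y, Y <= y -> u y <= e y)).
  { apply (eventually_above_or_below u (Derive u) (Derive (Derive u)) e (Derive e)
      (Derive (Derive e)) (fun y => b y ^ 2) (atil Rc a rho lam b) (dcoef Rc b rho) y0);
      auto with real. }
  split; [exact Hdichotomy|].
  intros C HC HaC Heinf Hsmall.
  destruct Hdichotomy as [[Y HY]|Hbelow]; [exfalso|exact Hbelow].
  set (Y' := Rmax Y y0).
  assert (HY' : forall y, Y' <= y -> Y <= y /\ y0 <= y).
  { intros y Hy. generalize (Rmax_l Y y0) (Rmax_r Y y0). unfold Y' in Hy. lra. }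
  apply (not_eventually_above u (Derive u) (Derive (Derive u)) e (fun y => b y ^ 2)
      (atil Rc a rho lam b) (dcoef Rc b rho) Y' C HC); auto;
    intros y Hy; destruct (HY' y Hy) as [HYy Hy0y].
  - now apply Hderiv, Hu1.
  - now apply Hderiv, Hu2.
  - split; [now apply Hetapos|now apply HY].
  - now apply Hb2.
  - now apply dcoef_nonneg, Hrhob, Hin.
  - specialize (HaC y Hy0y). specialize (Hb2 y Hy0y).
    apply Rle_div_l in HaC; [lra|exact Hb2].
  - now apply Hode.
Qed.
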